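(* Let $q$ be a prime power, $m\ge2$, $s,\ell,r_1,\dots,r_m\ge1$ integers, $k=m\ell-s$ with $k\ge\ell$, $n=\sum_{i=1}^m(\ell+r_i)$, $R=\sum_i r_i$. For $\alpha=(\alpha_{w,z})\in\mathbb{F}_q^{sk}$ and $\beta=(\beta_{t,i,j})\in\mathbb{F}_q^{\ell R}$ ($1\le w\le k$, $1\le z\le s$, $1\le t\le\ell$, $1\le i\le m$, $1\le j\le r_i$) let $G(\alpha,\beta)=(C_1\mid D_1\mid\dots\mid C_m\mid D_m)\in\mathbb{F}_q^{k\times n}$, where $(C_1\mid\dots\mid C_m)=[I_k\mid A]$ with $A=(\alpha_{w,z})\in\mathbb{F}_q^{k\times s}$, each $C_i$ has $\ell$ columns, and $D_i\in\mathbb{F}_q^{k\times r_i}$ has $j$-th column $\sum_{t=1}^\ell\beta_{t,i,j}C_i^{(t)}$, $C_i^{(t)}$ being the $t$-th column of $C_i$. If the entries of $\alpha$ and $\beta$ are chosen independently and uniformly at random in $\mathbb{F}_q$, then the probability that the row space of $G(\alpha,\beta)$ is an $[n,k,\ell;r_1,\dots,r_m]$-PMDS code is at least $$1-\frac{2(n-k)\binom{n-1}{k-1}}{q}.$$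
   Context: An $[n,k]$-MDS code over a field $\mathbb{F}$ is a linear code in $\mathbb{F}^n$ of dimension $k$ and minimum Hamming distance $n-k+1$. PMDS codes: let $\ell,m,r_1,\dots,r_m$ be positive integers, $n=\sum_{i=1}^m(r_i+\ell)$, and $C\subseteq\mathbb{F}^n$ a linear code of dimension $k<n$ with generator matrix $G=(B_1\mid\dots\mid B_m)$, $B_i\in\mathbb{F}^{k\times(r_i+\ell)}$ (here $B_i=(C_i\mid D_i)$). Then $C$ is an $[n,k,\ell;r_1,\dots,r_m]$-PMDS code if (i) for each $i$ the row space of $B_i$ is an $[r_i+\ell,\ell]$-MDS code, and (ii) for any choice of $r_i$ erased coordinates in the $i$-th block for every $i$, the code obtained from $C$ by puncturing these coordinates is an $[m\ell,k]$-MDS code. *)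

From mathcomp Require Import all_boot all_algebra.
Set Implicit Arguments. Unset Strict Implicit. Unset Printing Implicit Defensive.
Import GRing.Theory Num.Theory.
Local Open Scope ring_scope.

Section Codes.
Variable F : finFieldType.

Definition wt N (v : 'rV[F]_N) : nat := #|[set j : 'I_N | v 0 j != 0]|.

Definition has_min_dist k N (M : 'M[F]_(k, N)) (d : nat) : bool :=
  [exists u : 'rV[F]_k, (u *m M != 0) && (wt (u *m M) == d)] &&
  [forall u : 'rV[F]_k, (u *m M != 0) ==> (d <= wt (u *m M))%N].

Definition is_MDS k N (M : 'M[F]_(k, N)) (d : nat) : bool :=
  (\rank M == d) && has_min_dist M (N - d + 1).

(* Restriction of M to the columns in S (i.e. puncturing the complement),
   columns kept in increasing order. *)
Definition colsub_set k N (S : {set 'I_N}) (M : 'M[F]_(k, N)) : 'M[F]_(k, #|S|) :=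
  colsub (fun j : 'I_#|S| => enum_val j) M.

End Codes.

Definition boff m l (r : 'I_m -> nat) (i : 'I_m) : nat :=
  (\sum_(i' < m | (i' < i)%N) (l + r i'))%N.

Definition block n m l (r : 'I_m -> nat) (i : 'I_m) : {set 'I_n} :=
  [set j : 'I_n | (boff l r i <= j < boff l r i + (l + r i))%N].

Definition is_PMDS (F : finFieldType) k n m l (r : 'I_m -> nat)
    (G : 'M[F]_(k, n)) : bool :=
  [&& n == (\sum_(i < m) (l + r i))%N, (k < n)%N, \rank G == k,
      [forall i : 'I_m, is_MDS (colsub_set (block n l r i) G) l] &
      [forall E : {set 'I_n},
         [forall i : 'I_m, #|E :&: block n l r i| == r i] ==>
         is_MDS (colsub_set (~: E) G) k]].

(* Entry w of the t-th column (0-indexed) of C_i, i.e. column i*l+t of [I_k | A]. *)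
Definition Ccol (F : finFieldType) k s l (alpha : {ffun 'I_k * 'I_s -> F})
    (i t : nat) (w : 'I_k) : F :=
  let c := (i * l + t)%N in
  if (c < k)%N then ((w : nat) == c)%:R
  else if insub (c - k)%N is Some z then alpha (w, z) else 0.

Definition Gmat (F : finFieldType) k s n m l (r : 'I_m -> nat)
    (alpha : {ffun 'I_k * 'I_s -> F})
    (beta : {ffun 'I_l * {i : 'I_m & 'I_(r i)} -> F}) : 'M[F]_(k, n) :=
  \matrix_(w < k, j < n)
    match [pick i : 'I_m | j \in block n l r i] with
    | Some i =>
        let c := (j - boff l r i)%N in
        if (c < l)%N then @Ccol F k s l alpha i c w
        else \sum_(t < l)
               (if @insub _ (fun x => x < r i)%N 'I_(r i) (c - l)%N is Some jj
                then beta (t, @Tagged 'I_m i (fun i => 'I_(r i)) jj) else 0)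
               * @Ccol F k s l alpha i t w
    | None => 0
    end.

Definition prob (T : finType) (P : pred T) : rat :=
  (#|[set x : T | P x]|%:R / #|T|%:R)%R.

From mathcomp Require Import all_boot all_algebra.
From mathcomp Require Import zify.
Set Implicit Arguments. Unset Strict Implicit. Unset Printing Implicit Defensive.
Import GRing.Theory Num.Theory.
Local Open Scope ring_scope.

(* G(alpha, beta) is PMDS as soon as every k x k minor on a set S
   of k columns meeting each block in at most l columns is nonzero.  In such a
   minor, a column of A is linear in fresh variables alpha_(., z), and a
   redundancy column of block i is linear in fresh variables beta_(., i, j),
   with coefficients the l columns of C_i, one of which is not in S.
   Expanding the determinant along that column, a nonzero linear form in
   fresh variables vanishes on a 1/q fraction of the parameters, so the minor
   vanishes with probability at most 1/q more than the minor with the column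
   replaced by a suitable coefficient column.  After one step per column of A
   and two per redundancy column only columns of I_k remain, so the minor
   vanishes with probability at most 2 #(S outside I_k) / q, and a union bound
   over the sets S gives 2 (n - k) C(n - 1, k - 1) / q. *)

(** * Finite combinatorics *)

Lemma leq_card_into (X T : finType) (A : {set T}) (f : X -> T) :
  injective f -> (forall x, f x \in A) -> (#|X| <= #|A|)%N.
Proof.
move=> f_inj fA; rewrite -cardsT -(card_imset _ f_inj).
by apply/subset_leq_card/subsetP => _ /imsetP[x _ ->].
Qed.

Lemma exists_missed_value (I X : finType) (T : eqType) (f : I -> T) (D : X -> T)
    (B : {set X}) :
  injective f -> (forall y t, D y = f t -> y \in B) -> (#|B| < #|I|)%N ->
  exists t, forall y, D y != f t.
Proof.
move=> f_inj DB ltBI.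
case: (pickP (fun t => [forall y, D y != f t])) => [t /forallP | hit]; first by exists t.
have ex_pre t : exists y, D y == f t.
  by have /negbT/forallPn[y /negPn] := hit t; exists y.
have preP t : D (xchoose (ex_pre t)) = f t by apply/eqP/(xchooseP (ex_pre t)).
have pre_inj : injective (fun t => xchoose (ex_pre t)).
  by move=> t1 t2 eq12; apply: f_inj; rewrite -!preP eq12.
by have := leq_card_into pre_inj (fun t => DB _ _ (preP t)); rewrite leqNgt ltBI.
Qed.

Section FunWith.
Variables (X : finType) (T : eqType) (D : X -> T) (x : X) (v : T).

Lemma with_inj : injective D -> (forall y, D y != v) -> injective [eta D with x |-> v].
Proof.
move=> D_inj Dv y1 y2 /=; case: eqP => [->|_]; case: eqP => [->|_] //.
- by move=> vD; have := Dv y2; rewrite -vD eqxx.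
- by move=> Dv'; have := Dv y1; rewrite Dv' eqxx.
- exact: D_inj.
Qed.

Lemma sum_with (f : T -> nat) :
  (\sum_y f ([eta D with x |-> v] y) + f (D x) = \sum_y f (D y) + f v)%N.
Proof.
rewrite (bigD1 x) // [in RHS](bigD1 x) //= eqxx.
rewrite (eq_bigr (fun y => f (D y))); last by move=> y /negbTE ->.
lia.
Qed.

End FunWith.

Section EnumAt.
Variables (T : finType) (A : {set T}) (x0 : T) (d : nat).
Hypothesis d_le_A : (d <= #|A|)%N.

Definition enum_at (x : 'I_d) : T := nth x0 (enum A) x.

Lemma enum_at_size (x : 'I_d) : (x < size (enum A))%N.
Proof. by rewrite -cardE; apply: leq_trans d_le_A. Qed.

Lemma enum_at_inj : injective enum_at.
Proof.
by move=> x y /eqP; rewrite nth_uniq ?enum_uniq ?enum_at_size // => /eqP /val_inj.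
Qed.

Lemma enum_at_mem x : enum_at x \in A.
Proof. by rewrite /enum_at -mem_enum mem_nth ?enum_at_size. Qed.

End EnumAt.

Lemma enum_at_image (T : finType) (A : {set T}) x0 d :
  #|A| = d -> [set enum_at A x0 x | x in [set: 'I_d]] = A.
Proof.
move=> cardA; have d_le_A : (d <= #|A|)%N by rewrite cardA.
apply/eqP; rewrite eqEcard card_imset ?cardsT ?card_ord ?cardA ?leqnn ?andbT.
  by apply/subsetP => _ /imsetP[x _ ->]; apply: enum_at_mem.
exact: enum_at_inj.
Qed.

Lemma sum_enum_at (T : finType) (A : {set T}) x0 d (c : T -> nat) :
  #|A| = d -> (\sum_(x < d) c (enum_at A x0 x) = \sum_(j in A) c j)%N.
Proof.
move=> cardA; have d_le_A : (d <= #|A|)%N by rewrite cardA.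
rewrite -[in RHS](enum_at_image x0 cardA) big_imset /=; last first.
  by move=> x y _ _; apply: enum_at_inj.
by apply: eq_bigl => x; rewrite inE.
Qed.

Lemma leq_card_bigcup (I T : finType) (P : pred I) (B : I -> {set T}) :
  (#|\bigcup_(i | P i) B i| <= \sum_(i | P i) #|B i|)%N.
Proof.
elim/big_rec2: _ => [|i U c _ le_Uc]; first by rewrite cards0.
by apply: leq_trans (leq_card_setU _ _) _; rewrite leq_add2l.
Qed.

Lemma card_ksets_mem (T : finType) k (j : T) :
  (#|[set S : {set T} | (#|S| == k) && (j \in S)]| <= 'C(#|T|.-1, k.-1))%N.
Proof.
rewrite -(cardsC1 j) -cards_draws.
rewrite -(card_in_imset (f := fun S => S :\ j)) => [|S1 S2]; last first.
  rewrite !inE => /andP[_ jS1] /andP[_ jS2] eqS.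
  by rewrite -(setD1K jS1) -(setD1K jS2) eqS.
apply/subset_leq_card/subsetP => _ /imsetP[S /[!inE] /andP[/eqP cardS jS] ->].
apply/andP; split; first by apply/subsetP => x; rewrite !inE => /andP[].
by rewrite (cardsD1 j S) jS in cardS; rewrite -cardS.
Qed.

Lemma sum_ksets_sum (T : finType) k (c : T -> nat) :
  (\sum_(S : {set T} | #|S| == k) \sum_(j in S) c j <= (\sum_j c j) * 'C(#|T|.-1, k.-1))%N.
Proof.
rewrite (exchange_big_dep xpredT) //= big_distrl /=; apply: leq_sum => j _.
by rewrite sum_nat_cond_const mulnC leq_mul2l card_ksets_mem orbT.
Qed.

(** * Column selections and MDS codes *)

Section DetColumn.
Variable R : comRingType.

Definition set_col n (A : 'M[R]_n) (j : 'I_n) (v : 'I_n -> R) : 'M[R]_n :=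
  \matrix_(i, j') if j' == j then v i else A i j'.

Lemma cofactor_set_col n (A : 'M[R]_n) j v i :
  cofactor (set_col A j v) i j = cofactor A i j.
Proof.
rewrite /cofactor; congr (_ * \det _); apply/matrixP => a b.
by rewrite !mxE eq_sym (negbTE (neq_lift j b)).
Qed.

Lemma det_col_linear n (A : 'M[R]_n) j p (y : 'I_p -> R) (v : 'I_p -> 'I_n -> R) :
  (forall i, A i j = \sum_t y t * v t i) ->
  \det A = \sum_t y t * \det (set_col A j (v t)).
Proof.
move=> Aj; rewrite (expand_det_col A j).
under eq_bigr do rewrite Aj big_distrl /=.
rewrite exchange_big /=; apply: eq_bigr => t _.
rewrite (expand_det_col _ j) big_distrr /=; apply: eq_bigr => i _.
by rewrite cofactor_set_col /set_col mxE eqxx -mulrA.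
Qed.

End DetColumn.

Section ColumnSelection.
Variable F : fieldType.

Lemma row_full_det n (A : 'M[F]_n) : row_full A = (\det A != 0).
Proof. by rewrite row_full_unit unitmxE unitfE. Qed.

Lemma row_full_colsub p e e' (A : 'M[F]_(p, e)) (h : 'I_e' -> 'I_e) :
  row_full A -> injective h -> row_full (colsub h A).
Proof.
move=> /row_fullP[B AB1] h_inj; apply/row_fullP; exists (rowsub h B).
apply/matrixP => x y; have := congr1 (fun M : 'M[F]_e => M (h x) (h y)) AB1.
rewrite !mxE (inj_eq h_inj) => <-; apply: eq_bigr => w _; by rewrite !mxE.
Qed.

Lemma row_full_colsub_covered p N e e' (M : 'M[F]_(p, N)) (g : 'I_e -> 'I_N)
    (g' : 'I_e' -> 'I_N) :
  injective g -> (forall x, exists y, g' y = g x) ->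
  row_full (colsub g' M) -> row_full (colsub g M).
Proof.
move=> g_inj g'_onto full_g'.
have ex_h x : exists y, g' y == g x by have [y <-] := g'_onto x; exists y.
pose h x := xchoose (ex_h x).
have hE x : g' (h x) = g x by apply/eqP/(xchooseP (ex_h x)).
have -> : colsub g M = colsub h (colsub g' M) by apply/matrixP => w x; rewrite !mxE hE.
by apply: row_full_colsub full_g' _ => x y /(congr1 g'); rewrite !hE => /g_inj.
Qed.

Lemma colsub_mul1mx p e N (g : 'I_e -> 'I_N) (M : 'M[F]_(p, N)) :
  colsub g M = M *m colsub g 1%:M.
Proof. by rewrite mulmx_colsub mulmx1. Qed.

Lemma mxrank_colsub p e N (g : 'I_e -> 'I_N) (M : 'M[F]_(p, N)) :
  (\rank (colsub g M) <= \rank M)%N.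
Proof. by rewrite colsub_mul1mx mxrankM_maxl. Qed.

Lemma colsub_spans p e N (g : 'I_e -> 'I_N) (M : 'M[F]_(p, N)) :
  (\rank M <= \rank (colsub g M))%N -> exists X : 'M[F]_(e, N), M = colsub g M *m X.
Proof.
move=> rkM.
have subT : ((colsub g M)^T <= M^T)%MS.
  by rewrite colsub_mul1mx trmx_mul submxMl.
have /submxP[X MX] : (M^T <= (colsub g M)^T)%MS.
  have [_ <-] := mxrank_leqif_sup subT.
  by rewrite !mxrank_tr eqn_leq rkM mxrank_colsub.
by exists X^T; apply: trmx_inj; rewrite trmx_mul trmxK.
Qed.

End ColumnSelection.

Section Weight.
Variable F : finFieldType.

Definition zeros N (v : 'rV[F]_N) := [set j | v 0 j == 0].

Lemma wt_zeros N (v : 'rV[F]_N) : wt v = (N - #|zeros v|)%N.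
Proof.
by rewrite /wt cardsCs card_ord; congr (_ - _)%N; apply: eq_card => j; rewrite !inE negbK.
Qed.

End Weight.

Section MDSCriterion.
Variables (F : finFieldType) (k N d : nat) (M : 'M[F]_(k, N)).
Hypotheses (d_gt0 : (0 < d)%N) (d_le_N : (d <= N)%N) (rankM_le : (\rank M <= d)%N).
Hypothesis cols_free : forall g : 'I_d -> 'I_N, injective g -> row_full (colsub g M).

Let g0 := widen_ord d_le_N.

Let g0_inj : injective g0.
Proof. by move=> x y; rewrite /g0 => /(congr1 val) /= /val_inj. Qed.

Lemma mxrank_MDS : \rank M = d.
Proof.
apply/eqP; rewrite eqn_leq rankM_le -{1}(eqP (cols_free g0_inj)); exact: mxrank_colsub.
Qed.

Lemma zeros_MDS_lt (u : 'rV[F]_k) : u *m M != 0 -> (#|zeros (u *m M)| < d)%N.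
Proof.
rewrite ltnNge; apply: contra => d_le_Z; set Z := zeros _ in d_le_Z.
pose x0 := g0 (Ordinal d_gt0); pose g := enum_at Z x0 (d := d).
have [X MX] : exists X, M = colsub g M *m X.
  apply: colsub_spans.
  by rewrite (eqP (cols_free (enum_at_inj (x0 := x0) d_le_Z))) mxrank_MDS.
have uMg : u *m colsub g M = 0.
  apply/matrixP => i x; have := enum_at_mem x0 d_le_Z x.
  by rewrite inE => /eqP Zx; rewrite ord1 mulmx_colsub mxE Zx mxE.
by rewrite MX mulmxA uMg mul0mx.
Qed.

Lemma exists_min_wt_MDS :
  exists2 u : 'rV[F]_k, u *m M != 0 & wt (u *m M) = (N - d + 1)%N.
Proof.
have /row_fullP[B B1] := cols_free g0_inj.
have lt_last : (d.-1 < d)%N by rewrite prednK.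
pose t0 := Ordinal lt_last; pose u := row t0 B.
have uMg x : (u *m M) 0 (g0 x) = (t0 == x)%:R.
  have := congr1 (fun A : 'M[F]_d => A t0 x) B1; rewrite mulmx_colsub !mxE => <-.
  by apply: eq_bigr => j _; rewrite !mxE.
have uM0 : u *m M != 0.
  apply: contraTneq isT => /matrixP/(_ 0 (g0 t0)).
  by rewrite uMg eqxx mxE => /eqP; rewrite oner_eq0.
exists u => //; rewrite wt_zeros.
have : (d.-1 <= #|zeros (u *m M)|)%N.
  rewrite -[d.-1]card_ord; apply: (@leq_card_into _ _ _ (fun x => g0 (lift t0 x))).
    by move=> x y /g0_inj /lift_inj.
  by move=> x; rewrite inE uMg eq_sym (negbTE (neq_lift _ _)).
have := zeros_MDS_lt uM0; rewrite -subn1; move: #|zeros _| => z; lia.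
Qed.

Lemma MDS_of_cols_free : is_MDS M d.
Proof.
rewrite /is_MDS mxrank_MDS eqxx /=; apply/andP; split.
  by have [u uM0 wtu] := exists_min_wt_MDS; apply/existsP; exists u; rewrite uM0 wtu eqxx.
apply/forallP => u; apply/implyP => uM0; rewrite wt_zeros.
by have := zeros_MDS_lt uM0; move: #|zeros _| => z; lia.
Qed.

End MDSCriterion.

(** * Roots of linear forms in fresh variables *)

Section LinearFormRoots.
Variables (F : finFieldType) (T : finType) (p : nat).
Variables (get : T -> {ffun 'I_p -> F}) (upd : T -> {ffun 'I_p -> F} -> T).
(* [get] and [upd] split [T] as [F ^ p] times a complement. *)
Hypothesis get_upd : forall a y, get (upd a y) = y.
Hypothesis upd_get : forall a, upd a (get a) = a.
Hypothesis upd_upd : forall a y y', upd (upd a y) y' = upd a y'.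

(* Shifting the coordinate [t] of [get a], where [h a t != 0], by [x] maps
   [roots * F] injectively into [T]. *)
Lemma card_linear_form_roots (h : T -> {ffun 'I_p -> F}) :
  (forall a y, h (upd a y) = h a) ->
  (#|[set a | (h a != 0%R) && ((\sum_t get a t * h a t)%R == 0%R)]| * #|F| <= #|T|)%N.
Proof.
move=> h_upd; set A := [set a | _].
pose shift a t x := upd a [ffun t' => get a t' + (t' == t)%:R * x].
have form_shift a t x :
    \sum_t' get (shift a t x) t' * h (shift a t x) t' =
    \sum_t' get a t' * h a t' + x * h a t.
  rewrite h_upd get_upd; under eq_bigr do rewrite ffunE mulrDl.
  rewrite big_split /=; congr (_ + _).
  by rewrite (bigD1 t) //= eqxx mul1r big1 ?addr0 // => t' /negbTE->; rewrite !mul0r.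
pose move ax := if [pick t | h ax.1 t != 0] is Some t then shift ax.1 t ax.2 else ax.1.
have h_move ax : h (move ax) = h ax.1 by rewrite /move; case: pickP => [t _|_]; rewrite ?h_upd.
have -> : (#|A| * #|F| = #|setX A [set: F]|)%N by rewrite cardsX cardsT.
rewrite -(card_in_imset (f := move)); first exact: max_card.
move=> [a x] [b y]; rewrite !inE /= !andbT => /andP[ha a0] /andP[hb b0] eq_ab.
have hab : h a = h b by rewrite -(h_move (a, x)) eq_ab h_move.
move: eq_ab; rewrite /move /= -hab; case: pickP => [t ht | h0]; last first.
  by case/eqP: ha; apply/ffunP => t; rewrite ffunE; apply/eqP/negbFE/h0.
move=> eq_ab; have xy : x = y.
  have := congr1 (fun c => \sum_t get c t * h c t) eq_ab; rewrite /= !form_shift.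
  by rewrite (eqP a0) (eqP b0) !add0r -hab => /mulIf; apply.
subst y; have gab : get a = get b.
  apply/ffunP => t'; have /ffunP/(_ t') := congr1 get eq_ab.
  by rewrite !get_upd !ffunE => /addIr.
congr (_, _); rewrite -(upd_get a) -(upd_get b) -gab.
by have := congr1 (upd^~ (get a)) eq_ab; rewrite /shift !upd_upd.
Qed.
End LinearFormRoots.

Section ColumnDescriptors.
Variables (F : finFieldType) (m s l k : nat) (r : 'I_m -> nat).

Local Notation Key := {i : 'I_m & 'I_(r i)}.
Local Notation Param := ({ffun 'I_k * 'I_s -> F} * {ffun 'I_l * Key -> F})%type.
Local Notation Desc := (nat + Key)%type.

Definition IA_col (al : {ffun 'I_k * 'I_s -> F}) (c : nat) (w : 'I_k) : F :=
  if (c < k)%N then ((w : nat) == c)%:R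
  else if insub (c - k)%N is Some z then al (w, z) else 0.

(* [inl c] describes column [c] of [I_k | A]; [inr (i; j)] describes the
   redundancy column [\sum_t beta_(t,i,j) C_i^(t)], where [C_i^(t)] is column
   [i * l + t] of [I_k | A]. *)
Definition desc_col (d : Desc) (ab : Param) (w : 'I_k) : F :=
  match d with
  | inl c => IA_col ab.1 c w
  | inr K => \sum_(t < l) ab.2 (t, K) * IA_col ab.1 (tag K * l + t) w
  end.

Definition desc_mx (D : 'I_k -> Desc) (ab : Param) : 'M[F]_k :=
  \matrix_(w, x) desc_col (D x) ab w.

Definition singular (D : 'I_k -> Desc) := [set ab : Param | \det (desc_mx D ab) == 0].

Lemma singular_ext D D' : D =1 D' -> singular D = singular D'.
Proof.
move=> eqD; apply/setP => ab; rewrite !inE; congr (\det _ == _).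
by apply/matrixP => w x; rewrite !mxE eqD.
Qed.

Lemma desc_mx_with D x d ab :
  desc_mx [eta D with x |-> d] ab = set_col (desc_mx D ab) x (desc_col d ab).
Proof. by apply/matrixP => w y; rewrite !mxE /=; case: eqP. Qed.

Lemma IA_col_id al (c : 'I_k) w : IA_col al c w = ((w : nat) == c)%:R.
Proof. by rewrite /IA_col ltn_ord. Qed.

Section Step.
Variables (D : 'I_k -> Desc) (x : 'I_k) (p : nat) (e : 'I_p -> Desc).
Variables (get : Param -> {ffun 'I_p -> F}) (upd : Param -> {ffun 'I_p -> F} -> Param).
Hypothesis get_upd : forall a y, get (upd a y) = y.
Hypothesis upd_get : forall a, upd a (get a) = a.
Hypothesis upd_upd : forall a y y', upd (upd a y) y' = upd a y'.
Hypothesis col_x : forall ab w, desc_col (D x) ab w = \sum_t get ab t * desc_col (e t) ab w.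
Hypothesis det_fresh : forall ab y t,
  \det (desc_mx [eta D with x |-> e t] (upd ab y)) = \det (desc_mx [eta D with x |-> e t] ab).

(* Expanding along column [x], [det (desc_mx D)] is a linear form in the
   fresh variables [get ab] whose coefficients do not depend on them. *)
Lemma card_singular_step t0 :
  (#|singular D| * #|F| <= #|singular [eta D with x |-> e t0]| * #|F| + #|{: Param}|)%N.
Proof.
pose h ab : {ffun 'I_p -> F} := [ffun t => \det (desc_mx [eta D with x |-> e t] ab)].
have h_upd a y : h (upd a y) = h a by apply/ffunP => t; rewrite !ffunE det_fresh.
have roots_le := card_linear_form_roots get_upd upd_get upd_upd h_upd.
apply: leq_trans (leq_add (leqnn _) roots_le); rewrite -mulnDl leq_mul2r; apply/orP; right.
apply: leq_trans (leq_card_setU _ _); apply/subset_leq_card/subsetP => ab.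
rewrite !inE => /eqP detD0.
have detD : \det (desc_mx D ab) = \sum_t get ab t * h ab t.
  rewrite (det_col_linear (j := x) (y := get ab) (v := fun t => desc_col (e t) ab)).
    by apply: eq_bigr => t _; rewrite ffunE desc_mx_with.
  by move=> w; rewrite mxE col_x.
have [ht0|ht0] := eqVneq (h ab t0) 0; first by rewrite -ht0 ffunE eqxx.
apply/orP; right; rewrite -detD detD0 eqxx andbT.
by apply: contraNneq ht0 => ->; rewrite ffunE.
Qed.
End Step.

Lemma card_singular_IA_step (D : 'I_k -> nat) x (w : 'I_k) :
  injective D -> (k <= D x < k + s)%N ->
  (#|singular (inl \o D)| * #|F| <=
   #|singular (inl \o [eta D with x |-> (w : nat)])| * #|F| + #|{: Param}|)%N.
Proof.
move=> D_inj /andP[kDx Dxks]; have ltz : (D x - k < s)%N by rewrite ltn_subLR.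
pose z := Ordinal ltz.
pose get (ab : Param) := [ffun w' => ab.1 (w', z)].
pose upd (ab : Param) y : Param :=
  ([ffun wz => if wz.2 == z then y wz.1 else ab.1 wz], ab.2).
have eqD : inl \o [eta D with x |-> (w : nat)] =1
           [eta inl \o D with x |-> @inl _ Key (w : nat)].
  by move=> y /=; case: eqP.
rewrite (singular_ext eqD).
apply: (card_singular_step (get := get) (upd := upd) (e := fun w' : 'I_k => inl (w' : nat))).
- by move=> ab y; apply/ffunP => w'; rewrite !ffunE eqxx.
- move=> [al be]; congr (_, _); apply/ffunP => -[w' z'].
  by rewrite ffunE /=; case: eqP => [->|]; rewrite ?ffunE.
- by move=> ab y y'; congr (_, _); apply/ffunP => wz; rewrite !ffunE; case: eqP.
- move=> ab w0; rewrite /= /IA_col ltnNge kDx /= insubT (bigD1 w0) //= ltn_ord eqxx mulr1 ffunE.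
  rewrite big1 ?addr0 // => w' neq_w'; rewrite ltn_ord.
  by rewrite val_eqE eq_sym (negbTE neq_w') mulr0.
- move=> ab y t; congr (\det _); apply/matrixP => w0 x'; rewrite !mxE /=.
  case: eqP => [_|neq_x] /=; first by rewrite !IA_col_id.
  rewrite /IA_col; case: ltnP => // kDx'; case: insubP => // z' _ val_z'.
  rewrite ffunE /=; case: eqP => // eq_z; case: neq_x; apply: D_inj.
  by move: val_z'; rewrite eq_z /=; lia.
Qed.

Lemma card_singular_red_step (D : 'I_k -> Desc) x (K : Key) (t0 : 'I_l) :
  injective D -> D x = inr K ->
  (#|singular D| * #|F| <=
   #|singular [eta D with x |-> inl (tag K * l + t0)%N]| * #|F| + #|{: Param}|)%N.
Proof.
move=> D_inj DxK.
pose get (ab : Param) := [ffun t => ab.2 (t, K)].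
pose upd (ab : Param) y : Param :=
  (ab.1, [ffun tK => if tK.2 == K then y tK.1 else ab.2 tK]).
apply: (card_singular_step (get := get) (upd := upd)
          (e := fun t : 'I_l => inl (tag K * l + t)%N)).
- by move=> ab y; apply/ffunP => t; rewrite !ffunE eqxx.
- move=> [al be]; congr (_, _); apply/ffunP => -[t K'].
  by rewrite ffunE /=; case: eqP => [->|]; rewrite ?ffunE.
- by move=> ab y y'; congr (_, _); apply/ffunP => tK; rewrite !ffunE; case: eqP.
- by move=> ab w; rewrite DxK; apply: eq_bigr => t _; rewrite ffunE.
- move=> ab y t; congr (\det _); apply/matrixP => w j; rewrite !mxE /=.
  case: eqP => [_|neq_j] //=; case Dj: (D j) => [c|K'] //=.
  apply: eq_bigr => t1 _; rewrite ffunE /=; case: eqP => // eqK.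
  by case: neq_j; apply: D_inj; rewrite Dj DxK eqK.
Qed.

Lemma det_desc_mx_id (D : 'I_k -> nat) ab :
  injective D -> (forall x, D x < k)%N -> \det (desc_mx (inl \o D) ab) != 0.
Proof.
move=> D_inj ltDk; pose g x := Ordinal (ltDk x).
have -> : desc_mx (inl \o D) ab = colsub g 1%:M.
  by apply/matrixP => w x; rewrite !mxE /= -[D x]/(val (g x)) IA_col_id val_eqE.
rewrite -row_full_det; apply: row_full_colsub; first by rewrite row_full_unit unitmx1.
by move=> x y /(congr1 val) /D_inj.
Qed.

Lemma card_singular_IA (D : 'I_k -> nat) :
  injective D -> (forall x, D x < k + s)%N ->
  (#|singular (inl \o D)| * #|F| <= (\sum_x (k <= D x)) * #|{: Param}|)%N.
Proof.
move=> D_inj ltD; move Ncols: (\sum_x _)%N => N.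
elim: N D D_inj ltD Ncols => [|N IH] D D_inj ltD Ncols.
  rewrite mul0n leqn0 muln_eq0 cards_eq0; apply/orP; left; apply/eqP/setP => ab.
  rewrite !inE; apply/negbTE/det_desc_mx_id => // x; rewrite ltnNge.
  by apply: contra_eqN Ncols => kDx; rewrite (bigD1 x) //= kDx.
have [x kDx] : exists x, (k <= D x)%N.
  apply/existsP; apply: contra_eqT Ncols => /existsPn noA.
  by rewrite big1 // => x _; rewrite (negbTE (noA x)).
have [w free_w] : exists w : 'I_k, forall y, D y != w.
  apply: (exists_missed_value (B := [set~ x])) => [|y t Dy|]; first exact: val_inj.
  - by rewrite !inE; apply: contraTneq kDx => <-; rewrite Dy -ltnNge.
  - by rewrite cardsC1 card_ord ltn_predL; exact: leq_trans (ltn0Sn x) (ltn_ord x).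
have := card_singular_IA_step w D_inj (x := x); rewrite kDx ltD => /(_ isT) step.
apply: leq_trans step _; rewrite mulSn addnC leq_add2l; apply: IH.
- exact: with_inj.
- by move=> y /=; case: eqP => _ //; apply: ltn_addr.
- have := sum_with D x w (fun c => k <= c)%N.
  by rewrite Ncols kDx leqNgt ltn_ord addn0 addn1 => -[].
Qed.

Definition desc_block (d : Desc) : nat :=
  match d with inl c => c %/ l | inr K => tag K end.

(* The number of [card_singular_*_step]s that turn the column into a column of
   [I_k]. *)
Definition desc_cost (d : Desc) : nat :=
  match d with inl c => k <= c | inr _ => 2 end.

Hypothesis l_gt0 : (0 < l)%N.

Lemma desc_block_IA (i t : nat) : (t < l)%N -> desc_block (inl (i * l + t)) = i.
Proof. by move=> lt_tl; rewrite /= divnMDl // divn_small // addn0. Qed.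

Lemma exists_free_block_col (D : 'I_k -> Desc) x K :
  (forall i, #|[set y | desc_block (D y) == i]| <= l)%N -> D x = inr K ->
  exists t0 : 'I_l, forall y, D y != inl (tag K * l + t0)%N.
Proof.
move=> Dblocks DxK; apply: (exists_missed_value (B := [set y | desc_block (D y) == tag K] :\ x)).
- by move=> t1 t2 [] /eqP; rewrite eqn_add2l => /eqP /val_inj.
- move=> y t Dy; rewrite !inE Dy desc_block_IA // eqxx andbT.
  by apply: contraTneq isT => eq_yx; move: Dy; rewrite eq_yx DxK.
- by move: (Dblocks (tag K)); rewrite (cardsD1 x) !inE DxK eqxx card_ord.
Qed.

Hypothesis ks_ml : (k + s = m * l)%N.

Lemma card_singular_le_cost (D : 'I_k -> Desc) :
  injective D -> (forall x c, D x = inl c -> c < k + s)%N ->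
  (forall i, #|[set y | desc_block (D y) == i]| <= l)%N ->
  (#|singular D| * #|F| <= (\sum_y desc_cost (D y)) * #|{: Param}|)%N.
Proof.
move=> D_inj ltD Dblocks; move Nred: (\sum_y (if D y is inr _ then 1 else 0))%N => N.
elim: N D D_inj ltD Dblocks Nred => [|N IH] D D_inj ltD Dblocks Nred.
  pose D0 y := if D y is inl c then c else 0%N.
  have DE : D =1 inl \o D0.
    move=> y; rewrite /D0 /=; case Dy: (D y) => [//|K].
    by move: Nred; rewrite (bigD1 y) //= Dy.
  rewrite (singular_ext DE) (eq_bigr _ (fun y _ => congr1 desc_cost (DE y))).
  apply: card_singular_IA => [y1 y2 eq12|y]; first by apply: D_inj; rewrite !DE /= eq12.
  by apply: (ltD y); rewrite DE.
have [x [K DxK]] : exists x K, D x = inr K.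
  case: (pickP [pred y | if D y is inr _ then true else false]) => [x /=|none].
    by case Dx: (D x) => [//|K] _; exists x, K.
  by move: Nred; rewrite big1 // => y _; have := none y; rewrite /=; case: (D y).
set i := tag K; have [t0 free_t0] := exists_free_block_col Dblocks DxK.
have lt_new : (i * l + t0 < k + s)%N.
  by rewrite ks_ml; have := leq_mul (ltn_ord i) (leqnn l); have := ltn_ord t0; lia.
set D' := [eta D with x |-> inl (i * l + t0)%N].
have cost_D' : ((\sum_y desc_cost (D' y)).+1 <= \sum_y desc_cost (D y))%N.
  have := sum_with D x (inl (i * l + t0)%N) desc_cost; rewrite DxK /=.
  by move: (\sum_y _)%N (\sum_y _)%N (leq_b1 (k <= i * l + t0)%N); lia.
apply: leq_trans (card_singular_red_step t0 D_inj DxK) _.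
apply: leq_trans (leq_mul cost_D' (leqnn _)); rewrite mulSn addnC leq_add2l.
apply: IH => [|y c|i'|].
- exact: with_inj.
- by rewrite /D' /=; case: eqP => [_ [<-] //|_]; apply: ltD.
- apply: leq_trans (Dblocks i'); apply/subset_leq_card/subsetP => y.
  by rewrite !inE /D' /=; case: (y =P x) => [->|//]; rewrite DxK desc_block_IA.
- have := sum_with D x (inl (i * l + t0)%N) (fun d => if d is inr _ then 1 else 0)%N.
  by rewrite DxK Nred addn0 addn1 => -[].
Qed.

End ColumnDescriptors.

(** * The columns of G(alpha, beta) *)

Section Blocks.
Variables (m l n : nat) (r : 'I_m -> nat).
Local Notation block := (block n l r).
Local Notation boff := (boff l r).

Lemma boff_lt (i i' : 'I_m) : (i < i')%N -> (boff i + (l + r i) <= boff i')%N.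
Proof.
move=> lt_ii'; rewrite /boff [X in (_ <= X)%N](bigID (fun x : 'I_m => (x < i)%N)) /=.
apply: leq_add; last by rewrite (bigD1 i) /= ?ltnn ?lt_ii' // leq_addr.
apply/eq_leq/eq_bigl => x; case: (ltnP x i) => [lt_xi|]; rewrite ?andbT ?andbF //.
by rewrite (ltn_trans lt_xi lt_ii').
Qed.

Lemma block_uniq (j : 'I_n) (i i' : 'I_m) : j \in block i -> j \in block i' -> i = i'.
Proof.
rewrite !inE => /andP[lo hi] /andP[lo' hi'].
by case: (ltngtP i i') => [/boff_lt|/boff_lt|/val_inj //]; lia.
Qed.

Hypothesis n_sum : n = (\sum_(i < m) (l + r i))%N.

Lemma boff_end (i : 'I_m) : (boff i + (l + r i) <= n)%N.
Proof.
rewrite n_sum /boff [X in (_ <= X)%N](bigID (fun x : 'I_m => (x < i)%N)) /=.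
by rewrite leq_add // (bigD1 i) //= ?ltnn ?leq_addr.
Qed.

Lemma card_block (i : 'I_m) : #|block i| = (l + r i)%N.
Proof.
have lt_n (t : 'I_(l + r i)) : (boff i + t < n)%N.
  by apply: leq_trans (boff_end i); rewrite ltn_add2l.
have shift_inj : injective (fun t => Ordinal (lt_n t)).
  by move=> t1 t2 [] /eqP; rewrite eqn_add2l => /eqP /val_inj.
rewrite -[RHS]card_ord -(card_imset _ shift_inj); apply: eq_card => j.
rewrite inE; apply/andP/imsetP => [[lo hi]|[t _ ->]]; last by rewrite /= leq_addr ltn_add2l.
have lt_t : (j - boff i < l + r i)%N by lia.
by exists (Ordinal lt_t) => //; apply: val_inj => /=; lia.
Qed.

Lemma sum_bigcup_block (E : 'I_n -> nat) :
  (\sum_(j in \bigcup_i block i) E j = \sum_i \sum_(j in block i) E j)%N.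
Proof.
apply: partition_disjoint_bigcup => i i' neq_ii'; rewrite -setI_eq0.
apply/eqP/setP => j; rewrite in_setI in_set0; apply/negP => /andP[ji ji'].
by case/eqP: neq_ii'; apply: block_uniq ji ji'.
Qed.

Lemma bigcup_block : \bigcup_i block i = [set: 'I_n].
Proof.
apply/eqP; rewrite eqEcard subsetT cardsT card_ord -sum1_card sum_bigcup_block.
by rewrite [in X in (X <= _)%N]n_sum; apply/eq_leq/eq_bigr => i _; rewrite sum1_card card_block.
Qed.

Lemma block_cover (j : 'I_n) : exists i, j \in block i.
Proof.
have /bigcupP[i _ ji] : j \in \bigcup_i block i by rewrite bigcup_block inE.
by exists i.
Qed.

Lemma card_blocks (S : {set 'I_n}) : #|S| = (\sum_i #|S :&: block i|)%N.
Proof.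
rewrite -sum1_card big_mkcond /= (eq_bigl [in \bigcup_i block i]) => [|j]; last first.
  by rewrite bigcup_block inE.
rewrite sum_bigcup_block.
apply: eq_bigr => i _; rewrite -big_mkcondr sum1dep_card.
by apply: eq_card => j; rewrite in_set in_setI andbC.
Qed.

Lemma ml_le_n : (m * l <= n)%N.
Proof.
rewrite n_sum -[m in (m * _)%N]card_ord -sum_nat_const.
by apply: leq_sum => i _; apply: leq_addr.
Qed.

End Blocks.

Section GmatColumns.
Variables (F : finFieldType) (m s l k n : nat) (r : 'I_m -> nat).

Local Notation Key := {i : 'I_m & 'I_(r i)}.
Local Notation Param := ({ffun 'I_k * 'I_s -> F} * {ffun 'I_l * Key -> F})%type.
Local Notation Desc := (nat + Key)%type.
Local Notation block := (block n l r).
Local Notation boff := (boff l r).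
Local Notation G ab := (@Gmat F k s n m l r ab.1 ab.2).

(* The case analysis of [Gmat]; the junk value [inl 0] is never reached (see
   [Gmat_desc]). *)
Definition desc_at (i : 'I_m) (c : nat) : Desc :=
  if (c < l)%N then inl (i * l + c)%N
  else if @insub _ (fun x => x < r i)%N 'I_(r i) (c - l)%N is Some jj
       then inr (@Tagged 'I_m i (fun i => 'I_(r i)) jj) else inl 0%N.

Definition desc (j : 'I_n) : Desc :=
  if [pick i | j \in block i] is Some i then desc_at i (j - boff i) else inl 0%N.

Lemma pick_block (j : 'I_n) (i : 'I_m) : j \in block i -> [pick i | j \in block i] = Some i.
Proof.
move=> ji; case: pickP => [i' ji'|none]; last by move: (none i); rewrite ji.
by rewrite (block_uniq ji' ji).
Qed.

Lemma descE (j : 'I_n) (i : 'I_m) : j \in block i -> desc j = desc_at i (j - boff i).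
Proof. by move=> ji; rewrite /desc (pick_block ji). Qed.

Lemma offset_block (j : 'I_n) (i : 'I_m) : j \in block i -> (j - boff i < l + r i)%N.
Proof. by rewrite inE; lia. Qed.

Lemma desc_at_red (i : 'I_m) c : (l <= c < l + r i)%N ->
  exists2 jj : 'I_(r i), val jj = (c - l)%N & desc_at i c = inr (Tagged _ jj).
Proof.
case/andP => le_lc lt_c; have lt_jj : (c - l < r i)%N by rewrite ltn_subLR.
by exists (Ordinal lt_jj) => //; rewrite /desc_at ltnNge le_lc insubT.
Qed.

Lemma desc_at_inj (i : 'I_m) c1 c2 : (c1 < l + r i)%N -> (c2 < l + r i)%N ->
  desc_at i c1 = desc_at i c2 -> c1 = c2.
Proof.
move=> lt1 lt2; case: (ltnP c1 l) => [lt1l|le1]; case: (ltnP c2 l) => [lt2l|le2].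
- by rewrite /desc_at lt1l lt2l => -[] /eqP; rewrite eqn_add2l => /eqP.
- by have [jj _ ->] := desc_at_red (introT andP (conj le2 lt2)); rewrite /desc_at lt1l.
- by have [jj _ ->] := desc_at_red (introT andP (conj le1 lt1)); rewrite /desc_at lt2l.
have [jj1 jj1E ->] := desc_at_red (introT andP (conj le1 lt1)).
have [jj2 jj2E ->] := desc_at_red (introT andP (conj le2 lt2)).
by move=> [] /(congr1 (fun K : Key => val (tagged K))) /=; rewrite jj1E jj2E; lia.
Qed.

Hypothesis l_gt0 : (0 < l)%N.

Lemma desc_block_at (i : 'I_m) c : (c < l + r i)%N -> desc_block l (desc_at i c) = i.
Proof.
move=> lt_c; case: (ltnP c l) => [lt_cl|le_lc]; first by rewrite /desc_at lt_cl desc_block_IA.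
by have [jj _ ->] := desc_at_red (introT andP (conj le_lc lt_c)).
Qed.

Hypothesis n_sum : n = (\sum_(i < m) (l + r i))%N.

Lemma desc_block_of (j : 'I_n) (i : 'I_m) : j \in block i -> desc_block l (desc j) = i.
Proof. by move=> ji; rewrite (descE ji) desc_block_at ?offset_block. Qed.

Lemma desc_block_lt (j : 'I_n) : (desc_block l (desc j) < m)%N.
Proof. by have [i ji] := block_cover n_sum j; rewrite (desc_block_of ji). Qed.

Lemma desc_blockE (j : 'I_n) (i : 'I_m) : (desc_block l (desc j) == i) = (j \in block i).
Proof.
have [i' ji'] := block_cover n_sum j; rewrite (desc_block_of ji').
by apply/eqP/idP => [/val_inj <- // | ji]; rewrite (block_uniq ji' ji).
Qed.

Lemma desc_inj : injective desc.
Proof.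
move=> j1 j2 eq_desc.
have [i1 j1i1] := block_cover n_sum j1; have [i2 j2i2] := block_cover n_sum j2.
have eq_i : i1 = i2.
  by apply: val_inj; rewrite /= -(desc_block_of j1i1) -(desc_block_of j2i2) eq_desc.
subst i2; move: eq_desc; rewrite (descE j1i1) (descE j2i2).
move/desc_at_inj => /(_ (offset_block j1i1) (offset_block j2i2)) eq_off.
by apply: ord_inj; move: j1i1 j2i2; rewrite !inE; lia.
Qed.

Lemma desc_IA_surj c : (c < m * l)%N -> exists j, desc j = inl c.
Proof.
move=> lt_c; have lt_i : (c %/ l < m)%N by rewrite ltn_divLR.
have lt_t : (c %% l < l)%N by rewrite ltn_mod.
have lt_j : (boff (Ordinal lt_i) + c %% l < n)%N.
  by apply: leq_trans (boff_end n_sum (Ordinal lt_i)); rewrite ltn_add2l ltn_addr.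
have jb : Ordinal lt_j \in block (Ordinal lt_i).
  by rewrite inE /= leq_addr ltn_add2l ltn_addr.
by exists (Ordinal lt_j); rewrite (descE jb) /= addKn /desc_at lt_t /= -divn_eq.
Qed.

Lemma Gmat_desc (ab : Param) w j : G ab w j = desc_col (desc j) ab w.
Proof.
have [i ji] := block_cover n_sum j; rewrite mxE (descE ji) (pick_block ji) /desc_at.
case: ltnP => // le_lc; case: insubP => // /negP[]; rewrite ltn_subLR //.
exact: offset_block.
Qed.

Lemma colsub_Gmat (D : 'I_k -> 'I_n) (ab : Param) :
  colsub D (G ab) = desc_mx (desc \o D) ab.
Proof. by apply/matrixP => w x; rewrite [LHS]mxE Gmat_desc mxE. Qed.

Definition block_coef (ab : Param) (d : Desc) (t : 'I_l) : F :=
  match d with inl c => ((c %% l)%N == t)%:R | inr K => ab.2 (t, K) end.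

Lemma desc_col_block (j : 'I_n) (i : 'I_m) (ab : Param) w : j \in block i ->
  desc_col (desc j) ab w = \sum_(t < l) block_coef ab (desc j) t * IA_col ab.1 (i * l + t) w.
Proof.
move=> ji; rewrite (descE ji); case: (ltnP (j - boff i) l) => [lt_cl|le_lc]; last first.
  by have [jj _ ->] := desc_at_red (introT andP (conj le_lc (offset_block ji))).
rewrite /desc_at lt_cl /= (bigD1 (Ordinal lt_cl)) //= modnMDl modn_small // eqxx mul1r.
rewrite big1 ?addr0 // => t neq_t; case: eqP => [eq_t|]; last by rewrite mul0r.
by case/eqP: neq_t; apply: val_inj; rewrite /= -eq_t.
Qed.

Lemma mxrank_Gmat_block (ab : Param) (i : 'I_m) :
  (\rank (colsub_set (block i) (G ab)) <= l)%N.
Proof.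
pose C : 'M[F]_(k, l) := \matrix_(w, t) IA_col ab.1 (i * l + t) w.
pose X : 'M[F]_(l, #|block i|) := \matrix_(t, y) block_coef ab (desc (enum_val y)) t.
suff -> : colsub_set (block i) (G ab) = C *m X.
  exact: leq_trans (mxrankM_maxl _ _) (rank_leq_col _).
apply/matrixP => w y; rewrite /colsub_set [LHS]mxE Gmat_desc !mxE.
rewrite (desc_col_block _ _ (enum_valP y)); apply: eq_bigr => t _.
by rewrite !mxE mulrC.
Qed.

Hypothesis ks_ml : (k + s = m * l)%N.

Lemma desc_IA_lt (j : 'I_n) c : desc j = inl c -> (c < k + s)%N.
Proof.
have [i ji] := block_cover n_sum j; rewrite (descE ji).
case: (ltnP (j - boff i) l) => [lt_cl|le_lc].
  rewrite /desc_at lt_cl => -[<-]; rewrite ks_ml; apply: leq_trans (_ : i.+1 * l <= _)%N.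
    by rewrite mulSnr ltn_add2l.
  by rewrite leq_mul2r ltn_ord orbT.
by have [jj _ ->] := desc_at_red (introT andP (conj le_lc (offset_block ji))).
Qed.

Lemma sum_desc_cost : (\sum_j desc_cost k (desc j) <= 2 * (n - k))%N.
Proof.
(* The [k] columns of [I_k] cost nothing. *)
pose I := [set j | if desc j is inl c then (c < k)%N else false].
have le_kI : (k <= #|I|)%N.
  have ex_j (c : 'I_k) : exists j, desc j == inl (c : nat).
    have [|j <-] := @desc_IA_surj c; last by exists j.
    by rewrite -ks_ml; apply: ltn_addr.
  rewrite -[k in (k <= _)%N]card_ord.
  apply: (@leq_card_into _ _ _ (fun c => xchoose (ex_j c))).
    by move=> c c' /(congr1 desc); rewrite !(eqP (xchooseP (ex_j _))) => -[] /val_inj.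
  by move=> c; rewrite inE (eqP (xchooseP (ex_j c))) ltn_ord.
rewrite (bigID [in I]) /= big1 ?add0n => [|j]; last first.
  by rewrite inE; case: (desc j) => [c /= lt_ck|//]; rewrite leqNgt lt_ck.
apply: leq_trans (_ : \sum_(j | j \notin I) 2 <= _)%N.
  by apply: leq_sum => j _; case: (desc j) => [c|] //=; apply: leq_trans (leq_b1 _) _.
rewrite sum_nat_cond_const mulnC leq_mul2l; apply/orP; right.
have -> : [set j | j \notin I] = ~: I by apply/setP => j; rewrite !inE.
by have := cardsC I; rewrite card_ord; lia.
Qed.

End GmatColumns.

(** * The PMDS criterion *)

Section BlockBoundedSets.
Variables (m l n k : nat) (r : 'I_m -> nat).
Hypothesis n_sum : n = (\sum_(i < m) (l + r i))%N.
Local Notation block := (block n l r).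

Definition fits_blocks (S : {set 'I_n}) := [forall i, #|S :&: block i| <= l]%N.

Lemma fits_blocksS (A B : {set 'I_n}) : A \subset B -> fits_blocks B -> fits_blocks A.
Proof.
move=> sAB /forallP fitB; apply/forallP => i; apply: leq_trans (fitB i).
by apply/subset_leq_card/setSI.
Qed.

Lemma fits_blocks_small (A : {set 'I_n}) : (#|A| <= l)%N -> fits_blocks A.
Proof.
by move=> le_Al; apply/forallP => i; apply: leq_trans le_Al; apply/subset_leq_card/subsetIl.
Qed.

Lemma fits_blocks_extend (U : {set 'I_n}) : (k <= m * l)%N ->
  fits_blocks U -> (#|U| <= k)%N ->
  exists S : {set 'I_n}, [/\ U \subset S, fits_blocks S & #|S| = k].
Proof.
move=> k_le; move Nmiss: (k - #|U|)%N => N; elim: N U Nmiss => [|N IH] U Nmiss fitU le_Uk.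
  by exists U; split=> //; apply/eqP; rewrite eqn_leq le_Uk -subn_eq0 Nmiss.
have lt_Uk : (#|U| < k)%N by rewrite -subn_gt0 Nmiss.
have [i lt_Ui] : exists i, (#|U :&: block i| < l)%N.
  apply/existsP; apply: contraTT lt_Uk => /existsPn full; rewrite -leqNgt.
  apply: leq_trans k_le _; rewrite (card_blocks n_sum).
  apply: leq_trans (_ : \sum_(i < m) l <= _)%N; first by rewrite sum_nat_const card_ord.
  by apply: leq_sum => i _; rewrite leqNgt; exact: full.
have [j /setDP[ji jU]] : exists j, j \in block i :\: U.
  apply/set0Pn; rewrite -card_gt0 cardsD (card_block n_sum) setIC; lia.
have fit_jU : fits_blocks (j |: U).
  apply/forallP => i'; rewrite setIUl; have [<-|neq_i] := eqVneq i i'.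
    have := subset_leq_card (subsetIl [set j] (block i)); rewrite cardsU cards1; lia.
  rewrite (_ : [set j] :&: block i' = set0) ?set0U; first by move/forallP: fitU.
  apply/setP => j'; rewrite in_setI in_set1 in_set0; apply/negP => /andP[/eqP-> ji'].
  by rewrite (block_uniq ji ji') eqxx in neq_i.
have [|||S [sjUS fitS cardS]] := IH (j |: U) => //.
- by rewrite cardsU1 jU; lia.
- by rewrite cardsU1 jU.
- by exists S; split=> //; apply: subset_trans sjUS; apply: subsetUr.
Qed.
End BlockBoundedSets.

Section PMDSCriterion.
Variables (F : finFieldType) (m l n k : nat) (r : 'I_m -> nat) (M : 'M[F]_(k, n)).
Hypothesis n_sum : n = (\sum_(i < m) (l + r i))%N.
Hypotheses (l_gt0 : (0 < l)%N) (l_le_k : (l <= k)%N) (k_lt_ml : (k < m * l)%N).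
Hypothesis minors_full : forall S : {set 'I_n},
  #|S| = k -> fits_blocks l r S -> row_full (colsub_set S M).
Hypothesis mxrank_block : forall i, (\rank (colsub_set (block n l r i) M) <= l)%N.

Lemma row_full_fitting e (g : 'I_e -> 'I_n) : injective g -> (e <= k)%N ->
  fits_blocks l r [set g x | x in setT] -> row_full (colsub g M).
Proof.
move=> g_inj le_ek fit_g.
have card_g : #|[set g x | x in setT]| = e by rewrite card_imset // cardsT card_ord.
have le_gk : (#|[set g x | x in setT]| <= k)%N by rewrite card_g.
have [S [sgS fitS cardS]] := fits_blocks_extend n_sum (ltnW k_lt_ml) fit_g le_gk.
apply: (row_full_colsub_covered g_inj _ (minors_full cardS fitS)) => x.
have gxS : g x \in S by apply: (subsetP sgS); apply: imset_f.
by exists (enum_rank_in gxS (g x)); rewrite enum_rankK_in.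
Qed.

Lemma colsub_colsub_set N (X : {set 'I_n}) (g : 'I_N -> 'I_#|X|) :
  colsub g (colsub_set X M) = colsub (fun x => enum_val (g x)) M.
Proof. by apply/matrixP => w x; rewrite !mxE. Qed.

Lemma enum_val_comp_inj N (X : {set 'I_n}) (g : 'I_N -> 'I_#|X|) :
  injective g -> injective (fun x => enum_val (g x)).
Proof. by move=> g_inj x y /enum_val_inj /g_inj. Qed.

Lemma mxrank_minors : \rank M = k.
Proof.
have fit0 : fits_blocks l r (set0 : {set 'I_n}) by apply: fits_blocks_small; rewrite cards0.
have le0k : (#|(set0 : {set 'I_n})| <= k)%N by rewrite cards0.
have [S [_ fitS cardS]] := fits_blocks_extend n_sum (ltnW k_lt_ml) fit0 le0k.
have /eqP full := minors_full cardS fitS.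
have := mxrank_colsub (fun j : 'I_#|S| => enum_val j) M.
by rewrite -/(colsub_set S M) full cardS => rkM; apply/eqP; rewrite eqn_leq rank_leq_row rkM.
Qed.

Lemma MDS_block i : is_MDS (colsub_set (block n l r i) M) l.
Proof.
apply: MDS_of_cols_free => // [|g g_inj]; first by rewrite (card_block n_sum) leq_addr.
rewrite colsub_colsub_set; apply: row_full_fitting (enum_val_comp_inj g_inj) l_le_k _.
by apply: fits_blocks_small; rewrite card_imset ?cardsT ?card_ord //; apply: enum_val_comp_inj.
Qed.

Lemma MDS_punctured (E : {set 'I_n}) :
  (forall i, #|E :&: block n l r i| = r i) -> is_MDS (colsub_set (~: E) M) k.
Proof.
move=> cardE; have cardEC i : #|~: E :&: block n l r i| = l.
  have := cardsID E (block n l r i); rewrite (card_block n_sum) setIC cardE setDE setIC; lia.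
have cardC : #|~: E| = (m * l)%N.
  rewrite (card_blocks n_sum) (eq_bigr (fun _ => l)) => [|i _]; last exact: cardEC.
  by rewrite sum_nat_const card_ord.
apply: MDS_of_cols_free => [|||g g_inj]; first exact: leq_trans l_gt0 l_le_k.
- by rewrite cardC ltnW.
- exact: rank_leq_row.
rewrite colsub_colsub_set; apply: row_full_fitting (enum_val_comp_inj g_inj) (leqnn k) _.
apply: (@fits_blocksS _ _ _ _ _ (~: E)).
  by apply/subsetP => _ /imsetP[x _ ->]; apply: enum_valP.
by apply/forallP => i; rewrite cardEC.
Qed.

Lemma PMDS_of_minors : is_PMDS l r M.
Proof.
apply/and5P; split; rewrite ?mxrank_minors //.
- by rewrite n_sum.
- exact: leq_trans k_lt_ml (ml_le_n n_sum).
- by apply/forallP => i; apply: MDS_block.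
- by apply/forallP => E; apply/implyP => /forallP cardE; apply: MDS_punctured => i; apply/eqP.
Qed.

End PMDSCriterion.

(** * Counting *)

Section Counting.
Variables (F : finFieldType) (m s l k n : nat) (r : 'I_m -> nat).
Hypotheses (l_gt0 : (0 < l)%N) (s_gt0 : (0 < s)%N) (l_le_k : (l <= k)%N).
Hypothesis ks_ml : (k + s = m * l)%N.
Hypothesis n_sum : n = (\sum_(i < m) (l + r i))%N.

Local Notation Param := ({ffun 'I_k * 'I_s -> F} * {ffun 'I_l * {i : 'I_m & 'I_(r i)} -> F})%type.
Local Notation G ab := (@Gmat F k s n m l r ab.1 ab.2).
Local Notation desc := (desc l r).

Lemma card_not_row_full_minor (S : {set 'I_n}) : #|S| = k -> fits_blocks l r S ->
  (#|[set ab : Param | ~~ row_full (colsub_set S (G ab))]| * #|F| <=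
   (\sum_(j in S) desc_cost k (desc j)) * #|{: Param}|)%N.
Proof.
move=> cardS fitS; have k_le_S : (k <= #|S|)%N by rewrite cardS.
have [j0 _] : exists j0, j0 \in S by apply/card_gt0P; rewrite cardS; apply: leq_trans l_le_k.
pose g := enum_at S j0 (d := k); have g_inj : injective g := enum_at_inj k_le_S.
have sub_sing : [set ab : Param | ~~ row_full (colsub_set S (G ab))] \subset
                singular F s l (desc \o g).
  apply/subsetP => ab; rewrite !inE -colsub_Gmat //; apply: contraR; rewrite -row_full_det.
  move=> /(row_full_colsub_covered (g := fun j : 'I_#|S| => enum_val j) enum_val_inj); apply.
  move=> y; have : enum_val y \in [set g x | x in setT].
    by rewrite (enum_at_image _ cardS) enum_valP.
  by case/imsetP=> x _ ->; exists x.
apply: leq_trans (leq_mul (subset_leq_card sub_sing) (leqnn _)) _.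
rewrite -(sum_enum_at j0 _ cardS).
apply: card_singular_le_cost => //.
- by move=> x y /(desc_inj l_gt0 n_sum) /g_inj.
- by move=> x c /(desc_IA_lt n_sum ks_ml).
move=> i; case: (ltnP i m) => [lt_im|le_mi]; last first.
  rewrite (_ : [set x | _] = set0) ?cards0 //; apply/setP => x; rewrite !inE.
  by apply/negbTE; rewrite neq_ltn (leq_trans (desc_block_lt l_gt0 n_sum _) le_mi).
apply: leq_trans (_ : #|S :&: block n l r (Ordinal lt_im)| <= l)%N; last by move/forallP: fitS.
rewrite -(card_imset _ g_inj); apply/subset_leq_card/subsetP => _ /imsetP[x /[!inE] gxb ->].
move: gxb; rewrite -[i]/(val (Ordinal lt_im)) (desc_blockE l_gt0 n_sum) inE => ->.
by rewrite enum_at_mem.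
Qed.

Lemma card_not_PMDS :
  (#|[set ab : Param | ~~ is_PMDS l r (G ab)]| * #|F| <=
   2 * (n - k) * 'C(n.-1, k.-1) * #|{: Param}|)%N.
Proof.
pose P := [set S : {set 'I_n} | (#|S| == k) && fits_blocks l r S].
pose B S := [set ab : Param | ~~ row_full (colsub_set S (G ab))].
have cover : [set ab : Param | ~~ is_PMDS l r (G ab)] \subset \bigcup_(S in P) B S.
  apply/subsetP => ab; rewrite inE; apply: contraR => /bigcupP no_bad.
  have k_lt_ml : (k < m * l)%N by rewrite -ks_ml -addn1 leq_add2l.
  apply: (PMDS_of_minors n_sum l_gt0 l_le_k k_lt_ml) => [S cardS fitS|i].
    by apply/negPn/negP => not_full; apply: no_bad; exists S; rewrite !inE ?cardS ?eqxx.
  exact: mxrank_Gmat_block.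
apply: leq_trans (leq_mul (subset_leq_card cover) (leqnn _)) _.
apply: leq_trans (leq_mul (leq_card_bigcup _ _) (leqnn _)) _; rewrite big_distrl /=.
apply: leq_trans (_ : \sum_(S in P) (\sum_(j in S) desc_cost k (desc j)) * #|{: Param}| <= _)%N.
  by apply: leq_sum => S /[!inE] /andP[/eqP cardS fitS]; apply: card_not_row_full_minor.
rewrite -big_distrl leq_mul2r /=; apply/orP; right.
apply: leq_trans (_ : \sum_(S : {set 'I_n} | #|S| == k) \sum_(j in S) desc_cost k (desc j) <= _)%N.
  rewrite big_mkcond [X in (_ <= X)%N]big_mkcond; apply: leq_sum => S _ /=.
  by rewrite inE; case: (#|S| == k); case: (fits_blocks l r S).
apply: leq_trans (sum_ksets_sum k (fun j => desc_cost k (desc j))) _.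
rewrite card_ord leq_mul2r; apply/orP; right.
exact: (sum_desc_cost l_gt0 n_sum ks_ml).
Qed.

End Counting.

Lemma prob_ge_of_card_compl (T : finType) (P : pred T) (q X : nat) :
  (0 < q)%N -> (0 < #|T|)%N -> (#|[set x | ~~ P x]| * q <= X * #|T|)%N ->
  1 - (X%:R / q%:R : rat) <= prob P.
Proof.
move=> q_gt0 T_gt0 le_bad; rewrite /prob.
have cardTP : #|[set x | P x]| = (#|T| - #|[set x | ~~ P x]|)%N.
  have -> : [set x | ~~ P x] = ~: [set x | P x] by apply/setP => x; rewrite !inE.
  by rewrite -(cardsC [set x | P x]) addnK.
have le_T : (#|[set x | ~~ P x]| <= #|T|)%N by rewrite -cardsT subset_leq_card ?subsetT.
rewrite cardTP natrB // mulrBl divff ?pnatr_eq0 -?lt0n // lerD2l lerN2.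
by rewrite ler_pdivrMr ?ltr0n // mulrAC ler_pdivlMr ?ltr0n // -!natrM ler_nat.
Qed.

Unset Implicit Arguments.

Theorem theorem20 (F : finFieldType) (m s l k n : nat) (r : 'I_m -> nat) :
  (2 <= m)%N -> (1 <= s)%N -> (1 <= l)%N -> (forall i, 1 <= r i)%N ->
  k = (m * l - s)%N -> (l <= k)%N -> n = (\sum_(i < m) (l + r i))%N ->
  1 - ((2 * (n - k) * 'C(n.-1, k.-1))%:R / #|F|%:R : rat) <=
  prob (fun ab : {ffun 'I_k * 'I_s -> F} *
                 {ffun 'I_l * {i : 'I_m & 'I_(r i)} -> F} =>
          @is_PMDS F k n m l r (@Gmat F k s n m l r ab.1 ab.2)).
Proof.
move=> _ s_gt0 l_gt0 _ k_def l_le_k n_sum.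
have ks_ml : (k + s = m * l)%N.
  by rewrite k_def subnK //; apply: ltnW; rewrite -subn_gt0 -k_def; apply: leq_trans l_le_k.
apply: prob_ge_of_card_compl; first by apply/card_gt0P; exists 0.
  by apply/card_gt0P; exists ([ffun=> 0], [ffun=> 0]).
exact: card_not_PMDS.
Qed.
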